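(* Let $\Theta\subseteq\mathbb{R}$ be the parameter space, let $\mathbf U$ be a random variable with values in a space $\mathbb M$ whose distribution does not depend on $\theta$, and let $S$ be a real-valued statistic generated by the data generating equation $S=G_S(\mathbf U,\theta)$, where $G_S:\mathbb M\times\Theta\to\mathbb{R}$ is deterministic. Write $F_S(s,\theta)=P_\theta(S\le s)$ for the distribution function of $S$, $Q_s(\mathbf u)=\{\theta\in\Theta: s=G_S(\mathbf u,\theta)\}$ for the inverse image, and let $\mathbf U^\star$ be an independent copy of $\mathbf U$. Assume 1) for every $\mathbf u$, the function $\theta\mapsto G_S(\mathbf u,\theta)$ is non-decreasing; and 2) for every $\mathbf u$ and every $s$, $Q_s(\mathbf u)\neq\emptyset$. Then each $Q_s(\mathbf u)$ is an interval with endpoints $Q_s^-(\mathbf u)\le Q_s^+(\mathbf u)$, and for any $s_0$ and $\theta_0$, $$P\big(Q^+_{s_0}(\mathbf U^\star)\le\theta_0\big)=1-\lim_{\epsilon\downarrow0}F_S(s_0,\theta_0+\epsilon),\qquad P\big(Q^-_{s_0}(\mathbf U^\star)\le\theta_0\big)=1-\lim_{\epsilon\downarrow0}F_S(s_0-\epsilon,\theta_0).$$ If additionally 3) for all $\theta_0$ and $s_0$, $P_{\theta_0}(S=s_0)=F_S(s_0,\theta_0)-\lim_{\epsilon\downarrow0}F_S(s_0-\epsilon,\theta_0)=0$, then $F_S(s,\theta)$ is continuous as a function of $\theta$, $Q^+_{s_0}(\mathbf U^\star)=Q^-_{s_0}(\mathbf U^\star)$ with probability $1$, and $$P\big(Q_{s_0}(\mathbf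 U^\star)\le\theta_0\big)=1-F_S(s_0,\theta_0).$$
   Context: In the generalized fiducial framework, the generalized fiducial distribution (GFD) of $\theta$ given an observed value $s$ is the conditional distribution of $Q_s(\mathbf U^\star)$ given $Q_s(\mathbf U^\star)\neq\emptyset$; under assumption 2) this is simply the distribution of $Q_s(\mathbf U^\star)$. Under assumption 3), $Q_{s_0}(\mathbf U^\star)$ denotes the common value $Q^+_{s_0}(\mathbf U^\star)=Q^-_{s_0}(\mathbf U^\star)$. *)

From mathcomp Require Import all_boot all_order all_algebra.
From mathcomp Require Import all_classical all_reals all_analysis.
Set Implicit Arguments. Unset Strict Implicit. Unset Printing Implicit Defensive.
Import Order.TTheory GRing.Theory Num.Theory numFieldNormedType.Exports.
Local Open Scope classical_set_scope.
Local Open Scope ring_scope.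

(* Distribution function F_S(s,theta) = P_theta(S <= s), with S = G_S(U,theta)
   and U the identity on the probability space (M, P). *)
Definition distF {d} {M : measurableType d} {R : realType}
  (P : probability M R) (G : M -> R -> R) (s theta : R) : \bar R :=
  P [set u | G u theta <= s].

Definition Qset {M : Type} {R : realType} (Theta : set R) (G : M -> R -> R)
  (s : R) (u : M) : set R := [set theta | Theta theta /\ s = G u theta].

Definition Qplus {M : Type} {R : realType} (Theta : set R) (G : M -> R -> R)
  (s : R) (u : M) : \bar R := ereal_sup (EFin @` Qset Theta G s u).
Definition Qminus {M : Type} {R : realType} (Theta : set R) (G : M -> R -> R)
  (s : R) (u : M) : \bar R := ereal_inf (EFin @` Qset Theta G s u).

From mathcomp Require Import all_boot all_order all_algebra.
From mathcomp Require Import all_classical all_reals all_analysis.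
From mathcomp Require Import measurable_realfun lra.
Import Order.TTheory GRing.Theory Num.Theory numFieldNormedType.Exports.
Local Open Scope classical_set_scope.
Local Open Scope ring_scope.

(** Since every [G u] is nondecreasing and onto, [Q_s(u)] is an interval,
    [theta < Q^+_s(u)] iff [G u x <= s] for some [x > theta] in [Theta], and
    [Q^-_s(u) <= theta] iff [s <= G u theta].  So [{theta < Q^+}] is the
    increasing union of the events [{G U x <= s}] as [x] decreases to [theta],
    [{theta < Q^-}] is the increasing union of the events [{G U theta <= s - e}]
    as [e] decreases to [0], and continuity of the probability along these
    monotone families gives both limits.  When the level sets [{G U theta = s}]
    are null, the nested events [{G U theta < s}], [{theta < Q^+}] and
    [{G U theta <= s}] all have probability [F_S(s, theta)]; this gives right
    continuity in [theta] (left continuity holds anyway, by a decreasing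
    intersection) and the laws of [Q^+] and [Q^-].  Finally [Q^+ <> Q^-] forces
    [G U q = s] at some rational [q], a countable union of null events. *)

Section level_sets.
Context {d} {M : measurableType d} {R : realType} {f : M -> R}.
Hypothesis mf : measurable_fun setT f.

Lemma measurable_le_level s : measurable [set u | f u <= s].
Proof.
rewrite -[X in measurable X]setTI; apply: (mf measurableT [set x | x <= s]).
exact: closed_measurable.
Qed.

Lemma measurable_lt_level s : measurable [set u | f u < s].
Proof.
rewrite -[X in measurable X]setTI; apply: (mf measurableT [set x | x < s]).
exact: open_measurable.
Qed.

Lemma measurable_eq_level s : measurable [set u | f u = s].
Proof.
rewrite -[X in measurable X]setTI; apply: (mf measurableT [set x | x = s]).
exact: measurable_set1.
Qed.

Lemma measure_lt_level (mu : {measure set M -> \bar R}) s :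
  mu [set u | f u = s] = 0%E -> mu [set u | f u < s] = mu [set u | f u <= s].
Proof.
move=> null; have -> : [set u | f u <= s] = [set u | f u < s] `|` [set u | f u = s].
  apply/seteqP; split => u /=; last by case=> [/ltW|->].
  by rewrite le_eqVlt => /orP[/eqP|]; [right|left].
rewrite measureU; first by rewrite -[LHS]adde0; congr (_ + _)%E; exact/esym.
- exact: measurable_lt_level.
- exact: measurable_eq_level.
- by apply/seteqP; split => u //= [/lt_eqF/eqP].
Qed.

Lemma bigcup_le_sub_level s :
  \bigcup_(e in [set` `]0, 1[]) [set u | f u <= s - e] = [set u | f u < s].
Proof.
apply/seteqP; split => [u [e /= eI fue]|u /= fus].
  by move: eI; rewrite in_itv /= => /andP[e0 _]; lra.
pose e := Num.min (s - f u) (1 / 2).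
have e_le : e <= s - f u by rewrite ge_min lexx.
have e_half : e <= 1 / 2 by rewrite ge_min lexx orbT.
have e0 : 0 < e by rewrite lt_min subr_gt0 fus /=; lra.
by exists e; [rewrite /= in_itv /=; apply/andP; split; lra | rewrite /=; lra].
Qed.

End level_sets.

Lemma measure_bigcup_null {d} {M : measurableType d} {R : realType}
  (mu : {measure set M -> \bar R}) (I : countType) (D : set I) (F : I -> set M) :
  (forall i, D i -> measurable (F i)) -> (forall i, D i -> mu (F i) = 0%E) ->
  mu (\bigcup_(i in D) F i) = 0%E.
Proof.
move=> mF F0; rewrite bigcup_mkcond.
set FD := fun i => if i \in D then F i else set0.
have mFD i : measurable (FD i) by rewrite /FD; case: ifPn => // /set_mem; exact: mF.
have FD0 i : mu (FD i) = 0%E.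
  by rewrite /FD; case: ifPn => [/set_mem|_]; [exact: F0 | exact: measure0].
apply/negligibleP.
  by apply: countable_bigcupT_measurable => //; exact: countableP.
pose Fn n := if @unpickle I n is Some i then FD i else set0.
apply: (negligibleS _ (@negligible_bigcup _ _ _ mu Fn _)).
  by move=> u [i _ FDiu]; exists (pickle i) => //; rewrite /Fn pickleK.
move=> n; rewrite /Fn; case: unpickle => [i|]; last exact: negligible_set0.
exact/(negligibleP mu (mFD i))/FD0.
Qed.

Lemma open_itvoo_sides {R : realType} {A : set R} {x : R} : open A -> A x ->
  exists2 r, 0 < r & `]x - r, x[ `<=` A /\ `]x, x + r[ `<=` A.
Proof.
move=> oA Ax; near (0 : R)^'+ => r.
have r0 : 0 < r by near: r; exact: nbhs_right_gt.
have sub : `]x - r, x + r[ `<=` A by near: r; exact: open_itvoo_subset.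
exists r => //; split=> y; rewrite /= !in_itv /= => /andP[y1 y2].
  by apply: sub; rewrite /= in_itv /=; apply/andP; split; lra.
by apply: sub; rewrite /= in_itv /=; apply/andP; split; lra.
Unshelve. all: by end_near.
Qed.

Lemma cvg_dnbhs_at_right_left {R : realType} {T : topologicalType}
    (f : R -> T) (p : R) (l : T) :
  f x @[x --> p^'+] --> l -> f x @[x --> p^'-] --> l -> f x @[x --> p^'] --> l.
Proof.
move=> fr fl U Ul; have [a /= a0 Ua] := fr U Ul; have [b /= b0 Ub] := fl U Ul.
exists (Num.min a b) => /=; first by rewrite lt_min a0 b0.
move=> y /= yp; rewrite neq_lt => /orP[lt_yp|lt_py].
  by apply: Ub => //=; apply: (lt_le_trans yp); rewrite ge_min lexx orbT.
by apply: Ua => //=; apply: (lt_le_trans yp); rewrite ge_min lexx.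
Qed.

Lemma cvg_shift_at_right {R : realType} (a : R) : (a + e) @[e --> 0^'+] --> a^'+.
Proof.
move=> S [r /= r0 Sr]; exists r => // e /= e_small e0; apply: Sr => /=.
  by rewrite opprD addrA subrr sub0r normrN; rewrite sub0r normrN in e_small.
by rewrite ltrDl.
Qed.

Definition right_seq {R : realType} (a b : R) (n : nat) : R := a + (b - a) / n.+2%:R.

Section right_sequence.
Context {R : realType} {a b : R}.
Hypothesis ab : a < b.

Lemma right_seq_itv n : right_seq a b n \in `]a, b[.
Proof.
have ba : 0 < b - a by rewrite subr_gt0.
have lt_ba : (b - a) / n.+2%:R < b - a by rewrite ltr_pdivrMr // ltr_pMr // ltr1n.
by rewrite in_itv /= /right_seq ltrDl divr_gt0 //= -ltrBrDl.
Qed.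

Lemma nonincreasing_right_seq : {homo right_seq a b : n m / (n <= m)%N >-> m <= n}.
Proof.
move=> n m nm; rewrite /right_seq lerD2l ler_pM2l ?subr_gt0 //.
by rewrite lef_pV2 ?posrE // ler_nat !ltnS.
Qed.

Lemma right_seq_lt x : a < x -> exists n, right_seq a b n < x.
Proof.
move=> ax; have xa : 0 < x - a by rewrite subr_gt0.
have := truncnS_gt ((b - a) / (x - a)); rewrite ltr_pdivrMr // => lt_ba.
exists (Num.truncn ((b - a) / (x - a))).
rewrite /right_seq -ltrBrDl ltr_pdivrMr // mulrC.
by apply: (lt_le_trans lt_ba); rewrite ler_pM2r // ler_nat.
Qed.

Lemma cvg_right_seq : right_seq a b n @[n --> \oo] --> a^'+.
Proof.
move=> S [r /= r0 Sr].
have [n0 lt_n0] : exists n, right_seq a b n < a + r by apply: right_seq_lt; rewrite ltrDl.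
exists n0 => // n /= n0n.
have := right_seq_itv n; rewrite in_itv /= => /andP[an _].
have le_n0 : right_seq a b n <= right_seq a b n0 by exact: nonincreasing_right_seq.
by apply: Sr => //=; rewrite ltr_distlC; apply/andP; split; lra.
Qed.

End right_sequence.

Section monotone_measure_limits.
Context {d} {M : measurableType d} {R : realType} {a b : R} {A : R -> set M}.
Hypotheses (ab : a < b) (mA : {in `]a, b[, forall x, measurable (A x)}).

Let ab_bound : (BRight a < BLeft b)%O.
Proof. by rewrite ltBSide. Qed.

Let mA_seq n : measurable (A (right_seq a b n)).
Proof. exact/mA/right_seq_itv. Qed.

Lemma bigcup_itv_right_seq :
  {in `]a, b[ &, forall x y, x <= y -> A y `<=` A x} ->
  \bigcup_(x in [set` `]a, b[]) A x = \bigcup_n A (right_seq a b n).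
Proof.
move=> A_decr; apply/seteqP; split => [u [x /= xI Axu]|u [n _ Au]].
- have := xI; rewrite in_itv /= => /andP[ax _].
  have [n lt_nx] : exists n, right_seq a b n < x by exact: right_seq_lt.
  by exists n => //; apply: (A_decr _ x) (ltW lt_nx) _ Axu => //; exact: right_seq_itv.
- by exists (right_seq a b n) => //; exact: right_seq_itv.
Qed.

Lemma bigcap_itv_right_seq :
  {in `]a, b[ &, forall x y, x <= y -> A x `<=` A y} ->
  \bigcap_(x in [set` `]a, b[]) A x = \bigcap_n A (right_seq a b n).
Proof.
move=> A_incr; apply/seteqP; split => [u Au n _|u Au x /= xI].
- exact/Au/right_seq_itv.
- have := xI; rewrite in_itv /= => /andP[ax _].
  have [n lt_nx] : exists n, right_seq a b n < x by exact: right_seq_lt.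
  by apply: (A_incr (right_seq a b n)) (ltW lt_nx) _ (Au n I) => //; exact: right_seq_itv.
Qed.

Lemma measurable_bigcup_itv :
  {in `]a, b[ &, forall x y, x <= y -> A y `<=` A x} ->
  measurable (\bigcup_(x in [set` `]a, b[]) A x).
Proof. by move=> A_decr; rewrite bigcup_itv_right_seq //; exact: bigcupT_measurable. Qed.

Lemma measure_cvg_at_right_bigcup (mu : {measure set M -> \bar R}) :
  {in `]a, b[ &, forall x y, x <= y -> A y `<=` A x} ->
  mu (A x) @[x --> a^'+] --> mu (\bigcup_(x in [set` `]a, b[]) A x).
Proof.
move=> A_decr.
have mu_decr : {in `]a, b[ &, {homo (fun x => mu (A x)) : x y / x <= y >-> (y <= x)%E}}.
  move=> x y xI yI xy; apply: le_measure; rewrite ?inE; last exact: A_decr.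
  - exact: mA.
  - exact: mA.
(* The monotone limit exists; along [right_seq] it is the measure of a countable union. *)
have lim_itv := nonincreasing_at_right_cvge _ ab_bound mu_decr.
have lim_seq := cvg_comp _ _ (cvg_right_seq ab) lim_itv.
have seq_incr : nondecreasing_seq (fun n => A (right_seq a b n)).
  move=> n m nm; apply/subsetPset; apply: A_decr; rewrite ?right_seq_itv //.
  exact: nonincreasing_right_seq.
have lim_mu := nondecreasing_cvg_mu (mu := mu) mA_seq (bigcupT_measurable _ mA_seq) seq_incr.
rewrite bigcup_itv_right_seq // (cvg_unique _ lim_mu lim_seq) //.
Qed.

Lemma measure_cvg_at_right_bigcap (mu : {finite_measure set M -> \bar R}) :
  {in `]a, b[ &, forall x y, x <= y -> A x `<=` A y} ->
  mu (A x) @[x --> a^'+] --> mu (\bigcap_(x in [set` `]a, b[]) A x).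
Proof.
move=> A_incr.
have mu_incr : {in `]a, b[ &, {homo (fun x => mu (A x)) : x y / x <= y >-> (x <= y)%E}}.
  move=> x y xI yI xy; apply: le_measure; rewrite ?inE; last exact: A_incr.
  - exact: mA.
  - exact: mA.
have lim_itv := nondecreasing_at_right_cvge _ ab_bound mu_incr.
have lim_seq := cvg_comp _ _ (cvg_right_seq ab) lim_itv.
have seq_decr : nonincreasing_seq (fun n => A (right_seq a b n)).
  move=> n m nm; apply/subsetPset; apply: A_incr; rewrite ?right_seq_itv //.
  exact: nonincreasing_right_seq.
have mu_fin : (mu (A (right_seq a b 0)) < +oo)%E by rewrite ltey_eq fin_num_measure.
have lim_mu :=
  nonincreasing_cvg_mu (mu := mu) mu_fin mA_seq (bigcapT_measurable mA_seq) seq_decr.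
rewrite bigcap_itv_right_seq // (cvg_unique _ lim_mu lim_seq) //.
Qed.

End monotone_measure_limits.

Lemma measure_cvg_at_left_bigcap {d} {M : measurableType d} {R : realType} {a b : R}
    {A : R -> set M} (mu : {finite_measure set M -> \bar R}) :
  a < b -> {in `]a, b[, forall x, measurable (A x)} ->
  {in `]a, b[ &, forall x y, x <= y -> A y `<=` A x} ->
  mu (A x) @[x --> b^'-] --> mu (\bigcap_(x in [set` `]a, b[]) A x).
Proof.
move=> ab mA A_decr; apply/cvg_at_leftNP.
have memN x : (- x \in `]- b, - a[) = (x \in `]a, b[).
  by rewrite !in_itv /= !ltrN2 andbC.
have -> : \bigcap_(x in [set` `]a, b[]) A x = \bigcap_(y in [set` `]- b, - a[]) A (- y).
  apply/seteqP; split => u Au y yI; first by apply: Au; rewrite /= -memN opprK.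
  by rewrite -[y]opprK; apply: Au; rewrite /= memN.
apply: (@measure_cvg_at_right_bigcap _ _ _ _ _ (fun y => A (- y))).
- by rewrite ltrN2.
- by move=> y yI; apply: mA; rewrite -memN opprK.
- by move=> x y xI yI xy; apply: A_decr; rewrite ?lerN2 // -memN opprK.
Qed.

Section inverse_image.
Context {M : Type} {R : realType} {Theta : set R} {G : M -> R -> R}.
Hypothesis G_homo : forall u, {in Theta &, {homo G u : x y / x <= y}}.

Lemma lt_of_G_lt u x y : Theta x -> Theta y -> G u x < G u y -> x < y.
Proof.
move=> Tx Ty; apply: contraTT; rewrite -!leNgt => yx.
by apply: (G_homo u); rewrite ?inE.
Qed.

Lemma is_interval_Qset s u : is_interval Theta -> is_interval (Qset Theta G s u).
Proof.
move=> Theta_itv x y [Tx sx] [Ty sy] z /andP[xz zy].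
have Tz : Theta z by apply: (Theta_itv x y) => //; rewrite xz zy.
split=> //; apply/eqP; rewrite eq_le; apply/andP; split.
- by rewrite sx; apply: (G_homo u); rewrite ?inE.
- by rewrite sy; apply: (G_homo u); rewrite ?inE.
Qed.

Lemma Qplus_le_setE s t :
  [set u | (Qplus Theta G s u <= t%:E)%E] = ~` [set u | (t%:E < Qplus Theta G s u)%E].
Proof. by apply/seteqP; split => u /=; rewrite leNgt => /negP. Qed.

Hypothesis Qset_neq0 : forall u s, Qset Theta G s u !=set0.

Lemma Qminus_le_Qplus s u : (Qminus Theta G s u <= Qplus Theta G s u)%E.
Proof.
have [x Qx] := Qset_neq0 u s.
by apply: (@le_trans _ _ x%:E); [apply: ereal_inf_lbound | apply: ereal_sup_ubound]; exists x.
Qed.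

Lemma lt_QplusP s u t0 :
  (t0%:E < Qplus Theta G s u)%E <-> exists t, [/\ Theta t, t0 < t & G u t <= s].
Proof.
split=> [/ereal_sup_gt [_ [t [Tt st] <-]]|[t [Tt t0t Gts]]].
  by rewrite lte_fin => t0t; exists t; rewrite -st.
have Qplus_ge x : Qset Theta G s u x -> (x%:E <= Qplus Theta G s u)%E.
  by move=> Qx; apply: ereal_sup_ubound; exists x.
have [t' [Tt' st']] := Qset_neq0 u s.
have [t't|tt'] := leP t' t.
- apply: (@lt_le_trans _ _ t%:E); first by rewrite lte_fin.
  apply: Qplus_ge; split=> //; apply/eqP; rewrite eq_le Gts andbT st'.
  by apply: (G_homo u); rewrite ?inE.
- apply: (@lt_le_trans _ _ t'%:E); last exact: Qplus_ge.
  by rewrite lte_fin (lt_trans t0t).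
Qed.

Lemma Qminus_leP s u t0 : Theta t0 ->
  (Qminus Theta G s u <= t0%:E)%E <-> s <= G u t0.
Proof.
move=> Tt0; split.
  apply: contraPP => /negP; rewrite -ltNge => Gs.
  have [t' [Tt' mt']] := Qset_neq0 u ((G u t0 + s) / 2).
  have t0t' : t0 < t' by apply: (lt_of_G_lt u) => //; rewrite -mt'; lra.
  apply/negP; rewrite -ltNge; apply: (@lt_le_trans _ _ t'%:E); first by rewrite lte_fin.
  apply: le_ereal_inf_tmp => _ [x [Tx sx] <-]; rewrite lee_fin ltW //.
  by apply: (lt_of_G_lt u) => //; rewrite -mt' -sx; lra.
move=> sG; have [t' [Tt' st']] := Qset_neq0 u s.
have [t't0|t0t'] := leP t' t0.
  by apply: (@le_trans _ _ t'%:E); [apply: ereal_inf_lbound; exists t' | rewrite lee_fin].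
apply: ereal_inf_lbound; exists t0 => //; split=> //; apply/eqP.
rewrite eq_le sG st' /=; apply: (G_homo u); rewrite ?inE //; exact: ltW.
Qed.

Lemma Qminus_le_setE s t : Theta t ->
  [set u | (Qminus Theta G s u <= t%:E)%E] = ~` [set u | G u t < s].
Proof.
move=> Tt; apply/seteqP; split => u /=.
- by move/(Qminus_leP _ _ _ Tt); rewrite leNgt => /negP.
- by move/negP; rewrite -leNgt => /(Qminus_leP _ _ _ Tt).
Qed.

Lemma lt_Qplus_of_lt s u t : Theta t -> G u t < s -> (t%:E < Qplus Theta G s u)%E.
Proof.
move=> Tt Gts; have [t' [Tt' st']] := Qset_neq0 u s.
apply/lt_QplusP; exists t'; split=> //; last by rewrite -st'.
by apply: (lt_of_G_lt u) => //; rewrite -st'.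
Qed.

Lemma le_of_lt_Qplus s u t : Theta t -> (t%:E < Qplus Theta G s u)%E -> G u t <= s.
Proof.
move=> Tt /lt_QplusP [t' [Tt' tt' Gt's]]; apply: le_trans Gt's.
by apply: (G_homo u); rewrite ?inE //; exact: ltW.
Qed.

Lemma bigcup_le_level s t b : t < b -> `]t, b[ `<=` Theta ->
  \bigcup_(x in [set` `]t, b[]) [set u | G u x <= s] =
  [set u | (t%:E < Qplus Theta G s u)%E].
Proof.
move=> tb sub; apply/seteqP; split => [u [x /= xI Gxs]|u /lt_QplusP [t' [Tt' tt' Gt's]]].
  have := xI; rewrite in_itv /= => /andP[tx _].
  by apply/lt_QplusP; exists x; split => //; exact: sub.
have [tm mb] := midf_lt tb.
pose x := Num.min t' ((t + b) / 2).
have xI : x \in `]t, b[ by rewrite in_itv /= lt_min tt' tm gt_min mb orbT.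
exists x => //=; apply: le_trans Gt's; apply: (G_homo u); rewrite ?inE ?ge_min ?lexx //.
exact: sub.
Qed.

Lemma bigcap_le_level s a t : a < t -> Theta t -> `]a, t[ `<=` Theta ->
  \bigcap_(x in [set` `]a, t[]) [set u | G u x <= s] = [set u | G u t <= s].
Proof.
move=> a_t Tt sub; apply/seteqP; split => [u Gu|u Gts x /= xI]; last first.
  have := xI; rewrite in_itv /= => /andP[_ xt].
  by apply: le_trans Gts; apply: (G_homo u); rewrite ?inE //; [exact: sub | exact: ltW].
rewrite /= leNgt; apply/negP => sGt.
have [t' [Tt' mt']] := Qset_neq0 u ((s + G u t) / 2).
have t't : t' < t by apply: (lt_of_G_lt u) => //; rewrite -mt'; lra.
have [am mt] := midf_lt a_t.
pose x := Num.max t' ((a + t) / 2).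
have xI : x \in `]a, t[ by rewrite in_itv /= lt_max am orbT gt_max t't mt.
suff : s < G u x by rewrite ltNge (Gu x xI).
apply: (@lt_le_trans _ _ (G u t')); first by rewrite -mt'; lra.
by apply: (G_homo u); rewrite ?inE ?le_max ?lexx //; exact: sub.
Qed.

Lemma Qplus_neq_QminusE s : is_interval Theta ->
  [set u | Qplus Theta G s u <> Qminus Theta G s u] =
  \bigcup_(q in [set q : rat | Theta (ratr q)])
    ([set u | G u (ratr q) = s] `&` [set u | ((ratr q)%:E < Qplus Theta G s u)%E]).
Proof.
move=> Theta_itv; apply/seteqP; split => u /=.
- move=> neq; have lt_QQ : (Qminus Theta G s u < Qplus Theta G s u)%E.
    by rewrite lt_neqAle Qminus_le_Qplus andbT; apply/eqP => eqQ; apply: neq.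
  have [_ [y Qy <-] my] := ereal_sup_gt lt_QQ.
  have [_ [x Qx <-]] := ereal_inf_lt my; rewrite lte_fin => xy.
  have [q] := rat_in_itvoo xy; rewrite in_itv /= => /andP[xq qy].
  have [Tq sq] : Qset Theta G s u (ratr q).
    by apply: (is_interval_Qset _ _ Theta_itv x y) => //; rewrite !ltW.
  exists q => //; split=> //=.
  by apply: (@lt_le_trans _ _ y%:E); [rewrite lte_fin | apply: ereal_sup_ubound; exists y].
- move=> [q Tq [Gqs qQ]] eqQ.
  have Qm_le : (Qminus Theta G s u <= (ratr q)%:E)%E.
    by apply: ereal_inf_lbound; exists (ratr q).
  by rewrite -eqQ in Qm_le; have := lt_le_trans qQ Qm_le; rewrite ltxx.
Qed.

End inverse_image.

Section fiducial.
Context {d} {M : measurableType d} {R : realType} (P : probability M R).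
Context {Theta : set R} {G : M -> R -> R}.
Hypothesis Theta_open : open Theta.
Hypothesis Theta_itv : is_interval Theta.
Hypothesis G_meas : forall theta, Theta theta -> measurable_fun setT (fun u => G u theta).
Hypothesis G_homo : forall u, {in Theta &, {homo G u : x y / x <= y}}.
Hypothesis Qset_neq0 : forall u s, Qset Theta G s u !=set0.

Let measurable_le_itv s a b : `]a, b[ `<=` Theta ->
  {in `]a, b[, forall x, measurable [set u | G u x <= s]}.
Proof. by move=> sub x xI; apply/measurable_le_level/G_meas; exact: sub. Qed.

Let le_level_nonincreasing s a b : `]a, b[ `<=` Theta ->
  {in `]a, b[ &, forall x y, x <= y -> [set u | G u y <= s] `<=` [set u | G u x <= s]}.
Proof.
move=> sub x y xI yI xy u /= Gys; apply: le_trans Gys.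
by apply: (G_homo u); rewrite ?inE //; exact: sub.
Qed.

Lemma measurable_lt_Qplus s t : Theta t ->
  measurable [set u | (t%:E < Qplus Theta G s u)%E].
Proof.
move=> Tt; have [r r0 [_ sub]] := open_itvoo_sides Theta_open Tt.
have tr : t < t + r by lra.
rewrite -(bigcup_le_level G_homo Qset_neq0 s _ _ tr sub).
exact: measurable_bigcup_itv tr (measurable_le_itv s _ _ sub)
  (le_level_nonincreasing s _ _ sub).
Qed.

Lemma cvg_distF_at_right s t : Theta t ->
  distF P G s x @[x --> t^'+] --> P [set u | (t%:E < Qplus Theta G s u)%E].
Proof.
move=> Tt; have [r r0 [_ sub]] := open_itvoo_sides Theta_open Tt.
have tr : t < t + r by lra.
rewrite -(bigcup_le_level G_homo Qset_neq0 s _ _ tr sub).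
exact: measure_cvg_at_right_bigcup tr (measurable_le_itv s _ _ sub) P
  (le_level_nonincreasing s _ _ sub).
Qed.

Lemma cvg_distF_at_left s t : Theta t -> distF P G s x @[x --> t^'-] --> distF P G s t.
Proof.
move=> Tt; have [r r0 [sub _]] := open_itvoo_sides Theta_open Tt.
have rt : t - r < t by lra.
rewrite [X in _ --> X]/distF -(bigcap_le_level G_homo Qset_neq0 s _ _ rt Tt sub).
exact: measure_cvg_at_left_bigcap P rt (measurable_le_itv s _ _ sub)
  (le_level_nonincreasing s _ _ sub).
Qed.

Lemma cvg_distF_Qplus s t : Theta t ->
  distF P G s (t + e) @[e --> 0^'+] -->
    (1 - P [set u | (Qplus Theta G s u <= t%:E)%E])%E.
Proof.
move=> Tt; have mQ := measurable_lt_Qplus s _ Tt.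
rewrite Qplus_le_setE -(probability_setC P (measurableC mQ)) setCK.
exact: cvg_comp (cvg_shift_at_right t) (cvg_distF_at_right s _ Tt).
Qed.

Lemma cvg_distF_Qminus s t : Theta t ->
  distF P G (s - e) t @[e --> 0^'+] -->
    (1 - P [set u | (Qminus Theta G s u <= t%:E)%E])%E.
Proof.
move=> Tt; have mlt := measurable_lt_level (G_meas _ Tt) s.
rewrite (Qminus_le_setE G_homo Qset_neq0 s _ Tt) -(probability_setC P (measurableC mlt)) setCK.
rewrite -bigcup_le_sub_level.
apply: measure_cvg_at_right_bigcup ltr01 _ P _.
- by move=> e _; exact: measurable_le_level (G_meas _ Tt) _.
- by move=> e1 e2 _ _ e12 u /=; lra.
Qed.

Hypothesis G_level_null : forall t s, Theta t -> P [set u | G u t = s] = 0%E.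

Lemma P_lt_level s t : Theta t -> P [set u | G u t < s] = distF P G s t.
Proof. by move=> Tt; exact: measure_lt_level (G_meas _ Tt) P s (G_level_null _ s Tt). Qed.

Lemma P_lt_Qplus s t : Theta t ->
  P [set u | (t%:E < Qplus Theta G s u)%E] = distF P G s t.
Proof.
move=> Tt; have mQ := measurable_lt_Qplus s _ Tt.
apply/le_anti/andP; split; last rewrite -P_lt_level //.
- apply: le_measure; rewrite ?inE //; first exact: measurable_le_level (G_meas _ Tt) s.
  by move=> u; exact: le_of_lt_Qplus.
- apply: le_measure; rewrite ?inE //; first exact: measurable_lt_level (G_meas _ Tt) s.
  by move=> u; exact: lt_Qplus_of_lt.
Qed.

Lemma distF_continuous s t : Theta t -> distF P G s x @[x --> t] --> distF P G s t.
Proof.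
move=> Tt; apply/continuous_withinNx.
have from_right := cvg_distF_at_right s _ Tt; rewrite P_lt_Qplus // in from_right.
exact: cvg_dnbhs_at_right_left from_right (cvg_distF_at_left s _ Tt).
Qed.

Lemma Qplus_neq_Qminus_null s :
  P [set u | Qplus Theta G s u <> Qminus Theta G s u] = 0%E.
Proof.
rewrite (Qplus_neq_QminusE G_homo Qset_neq0 s Theta_itv).
have mEq q : Theta q -> measurable [set u | G u q = s].
  by move=> Tq; exact: measurable_eq_level (G_meas _ Tq) s.
apply: measure_bigcup_null => q Tq.
  exact: measurableI (mEq _ Tq) (measurable_lt_Qplus s _ Tq).
apply/eqP; rewrite -measure_le0 -(G_level_null _ s Tq).
apply: le_measure; rewrite ?inE; last exact: subIsetl.
- exact: measurableI (mEq _ Tq) (measurable_lt_Qplus s _ Tq).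
- exact: mEq.
Qed.

Lemma P_Qplus_le s t : Theta t ->
  P [set u | (Qplus Theta G s u <= t%:E)%E] = (1 - distF P G s t)%E.
Proof.
move=> Tt; rewrite Qplus_le_setE probability_setC ?P_lt_Qplus //.
exact: measurable_lt_Qplus s _ Tt.
Qed.

Lemma P_Qminus_le s t : Theta t ->
  P [set u | (Qminus Theta G s u <= t%:E)%E] = (1 - distF P G s t)%E.
Proof.
move=> Tt; rewrite (Qminus_le_setE G_homo Qset_neq0 s _ Tt) probability_setC ?P_lt_level //.
exact: measurable_lt_level (G_meas _ Tt) s.
Qed.

End fiducial.

Theorem theorem1 (d : measure_display) (M : measurableType d) (R : realType)
  (P : probability M R) (Theta : set R) (G : M -> R -> R)
  (Theta_open : open Theta) (Theta_itv : is_interval Theta)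
  (G_meas : forall theta, Theta theta -> measurable_fun setT (fun u => G u theta))
  (H1 : forall u, {in Theta &, {homo G u : x y / x <= y}})
  (H2 : forall u s, Qset Theta G s u !=set0) :
  (forall s u, is_interval (Qset Theta G s u) /\
               (Qminus Theta G s u <= Qplus Theta G s u)%E) /\
  (forall s0 theta0, Theta theta0 ->
     distF P G s0 (theta0 + e) @[e --> 0^'+] -->
       (1 - P [set u | (Qplus Theta G s0 u <= theta0%:E)%E])%E /\
     distF P G (s0 - e) theta0 @[e --> 0^'+] -->
       (1 - P [set u | (Qminus Theta G s0 u <= theta0%:E)%E])%E) /\
  ((forall theta0 s0, Theta theta0 -> P [set u | G u theta0 = s0] = 0%E) ->
     (forall s theta, Theta theta ->
        distF P G s x @[x --> theta] --> distF P G s theta) /\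
     (forall s0, P [set u | Qplus Theta G s0 u <> Qminus Theta G s0 u] = 0%E) /\
     (forall s0 theta0, Theta theta0 ->
        P [set u | (Qplus Theta G s0 u <= theta0%:E)%E] = (1 - distF P G s0 theta0)%E /\
        P [set u | (Qminus Theta G s0 u <= theta0%:E)%E] = (1 - distF P G s0 theta0)%E)).
Proof.
split; first by move=> s u; split; [exact: is_interval_Qset | exact: (Qminus_le_Qplus H2)].
split=> [s t Tt|null].
  by split; [exact: cvg_distF_Qplus | exact: cvg_distF_Qminus].
split; first by move=> s t Tt; exact: (distF_continuous P Theta_open).
split; first by move=> s; exact: Qplus_neq_Qminus_null.
by move=> s t Tt; split; [exact: P_Qplus_le | exact: P_Qminus_le].
Qed.
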